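(* For $0<x<\frac12$, $$\zeta''\left(0,x+\tfrac12\right)+\zeta''\left(0,\tfrac12-x\right)=\zeta''(0,2x)+\zeta''(0,1-2x)-[\zeta''(0,x)+\zeta''(0,1-x)]-2\log 2\,\log(2\sin 2\pi x).$$
   Context: For $x>0$ let $\zeta(s,x)=\sum_{n=0}^{\infty}(n+x)^{-s}$ ($\operatorname{Re}s>1$) be the Hurwitz zeta function, analytically continued to $\mathbb{C}\setminus\{1\}$, and let $\zeta''(0,x)=\frac{\partial^2}{\partial s^2}\zeta(s,x)\big|_{s=0}$. *)

From Stdlib Require Import Reals.
From Coquelicot Require Import Coquelicot.
Open Scope R_scope.

(* Periodic second Bernoulli function  B2({t}) = {t}^2 - {t} + 1/6,
   where {t} = t - floor t  (Int_part t = floor t). *)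
Definition B2per (t : R) : R :=
  let u := t - IZR (Int_part t) in u * u - u + 1 / 6.

(* Hurwitz zeta function zeta(s,x), x > 0, for real s > -1, s <> 1,
   given by the (second order) Euler-Maclaurin formula
     zeta(s,x) = x^(1-s)/(s-1) + x^(-s)/2 + s x^(-s-1)/12
                 - s(s+1)/2 * int_0^oo B2({t}) (t+x)^(-s-2) dt,
   which equals sum_{n>=0} (n+x)^(-s) for s > 1 and is the (restriction to
   real s of the) analytic continuation on Re s > -1. *)
Definition hurwitz_zeta (s x : R) : R :=
  Rpower x (1 - s) / (s - 1) + Rpower x (- s) / 2 + s * Rpower x (- s - 1) / 12
  - s * (s + 1) / 2 *
    RInt_gen (fun t => B2per t * Rpower (t + x) (- s - 2))
             (at_point 0) (Rbar_locally p_infty).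

Definition hurwitz_zeta2_at0 (x : R) : R :=
  Derive_n (fun s => hurwitz_zeta s x) 2 0.

From Stdlib Require Import Reals Lra Lia Psatz FunctionalExtensionality.
From Coquelicot Require Import Coquelicot.
Open Scope R_scope.

(* Write Z y for zeta''(0, y).  Differentiating the Euler-Maclaurin formula twice in s under
   the integral sign gives the shift rule Z y = (ln y)^2 + Z (y + 1) and the asymptotics
   Z y = h y + O(y^(-3/4)) with an explicit elementary h.  Iterating the shift N times, the
   combination of the six values of Z in the theorem equals -2 ln 2 times the logarithmic sum
   [ln_sum_defect (2 x) (2 N)], up to an error that vanishes as N -> oo.  For 0 < a < 1 these
   sums converge to ln (2 sin (PI a)): the difference between the cases a and 1/2 is the
   logarithm of a partial product of cos (PI z) = prod_n (1 - z^2 / (n + 1/2)^2), proved with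
   the Wallis-type integrals int_0^(PI/2) cos (2 z t) cos^n t dt, and the value ln 2 at
   a = 1/2 follows because the sum at a = 1/4 is half the sum at a = 1/2. *)

Lemma B2per_on (n : Z) (t : R) : IZR n <= t < IZR n + 1 ->
  B2per t = (t - IZR n) ^ 2 - (t - IZR n) + 1 / 6.
Proof.
  intros Ht; unfold B2per; cbv zeta.
  rewrite <- (Int_part_spec t n) by lra; ring.
Qed.

Lemma B2per_unit (t : R) : 0 <= t <= 1 -> B2per t = t ^ 2 - t + 1 / 6.
Proof.
  intros Ht; destruct (Req_dec t 1) as [-> | Ht1].
  - rewrite (B2per_on 1 1) by lra; ring.
  - rewrite (B2per_on 0 t) by lra; ring.
Qed.

Lemma B2per_add1 (t : R) : B2per (t + 1) = B2per t.
Proof.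
  destruct (base_Int_part t) as [H1 H2].
  rewrite (B2per_on (Int_part t) t), (B2per_on (Int_part t + 1) (t + 1))
    by (rewrite ?plus_IZR; lra).
  rewrite plus_IZR; ring.
Qed.

Lemma Rabs_B2per_le (t : R) : Rabs (B2per t) <= 1 / 6.
Proof.
  destruct (base_Int_part t) as [H1 H2].
  rewrite (B2per_on (Int_part t) t) by lra.
  set (u := t - IZR (Int_part t)).
  assert (0 <= u < 1) by (unfold u; lra).
  apply Rabs_le; split; nra.
Qed.

Lemma continuous_B2per (t : R) : continuous B2per t.
Proof.
  set (n := Int_part (t + 1 / 2)).
  destruct (base_Int_part (t + 1 / 2)) as [H1 H2]; fold n in H1, H2.
  (* Near t, the two parabolic arcs meeting at the integer n glue to (z - n)^2 - |z - n| + 1/6. *)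
  apply continuous_ext_loc with (fun z => (z - IZR n) ^ 2 - Rabs (z - IZR n) + 1 / 6).
  - exists (mkposreal (1 / 2) ltac:(lra)); intros z Hz.
    change (Rabs (z - t) < 1 / 2) in Hz; apply Rabs_def2 in Hz.
    destruct (Rle_lt_dec (IZR n) z).
    + rewrite (B2per_on n z), Rabs_right by lra; reflexivity.
    + rewrite (B2per_on (n - 1) z), Rabs_left, minus_IZR by (rewrite ?minus_IZR; lra).
      cbn; ring.
  - apply continuity_pt_filterlim.
    apply continuity_pt_plus; [apply continuity_pt_minus |].
    + apply derivable_continuous_pt; reg.
    + apply continuity_pt_filterlim, (continuous_Rabs_comp (fun z => z - IZR n)).
      apply continuity_pt_filterlim; reg.
    + apply continuity_pt_const; intros ? ?; reflexivity.
Qed.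

Lemma ln_le_sub_1 (v : R) : 0 < v -> ln v <= v - 1.
Proof.
  intros Hv; pose proof (exp_ineq1_le (ln v)) as H.
  rewrite exp_ln in H by lra; lra.
Qed.

Lemma ln_1_plus_bounds (v : R) : 0 <= v -> v / (1 + v) <= ln (1 + v) <= v.
Proof.
  intros Hv; split.
  - pose proof (ln_le_sub_1 (/ (1 + v)) ltac:(apply Rinv_0_lt_compat; lra)) as H.
    rewrite ln_Rinv in H by lra.
    replace (/ (1 + v) - 1) with (- (v / (1 + v))) in H by (field; lra); lra.
  - pose proof (ln_le_sub_1 (1 + v)); lra.
Qed.

Lemma ln_2_bounds : 0 < ln 2 < 1.
Proof.
  split; [rewrite <- ln_1; apply ln_increasing; lra |].
  assert (H : 2 < exp 1).
  { replace 1 with (1 / 2 + 1 / 2) by field; rewrite exp_plus.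
    pose proof (exp_ineq1_le (1 / 2)); nra. }
  rewrite <- (ln_exp 1); apply ln_increasing; lra.
Qed.

Lemma Rabs_exp_sub_1_sub_le (u : R) : Rabs (exp u - 1 - u) <= u ^ 2 * exp (Rabs u).
Proof.
  pose proof (exp_ineq1_le u); pose proof (exp_ineq1_le (- u)).
  pose proof (exp_pos u); pose proof (exp_pos (- u)).
  assert (Hinv : exp u * exp (- u) = 1)
    by (rewrite <- exp_plus, Rplus_opp_r; apply exp_0).
  rewrite Rabs_right by lra.
  destruct (Rle_lt_dec 0 u) as [Hu | Hu].
  - rewrite Rabs_right by lra.
    (* multiply through by exp (-u) >= 1 - u *)
    assert ((1 + u) * exp (- u) >= 1 - u ^ 2) by nra.
    nra.
  - rewrite Rabs_left by lra.
    (* exp u <= 1 / (1 - u) because exp (-u) >= 1 - u *)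
    assert (exp u * (1 - u) <= 1) by nra.
    assert (exp u - 1 - u <= u ^ 2) by nra.
    nra.
Qed.

Lemma Rpower_pos (u c : R) : 0 < Rpower u c.
Proof. apply exp_pos. Qed.

Lemma ln_le_Rpower (u a : R) : 0 < u -> 0 < a -> ln u <= Rpower u a / a.
Proof.
  intros Hu Ha; pose proof (ln_le_sub_1 (Rpower u a) (Rpower_pos u a)) as H.
  rewrite ln_Rpower in H.
  apply Rmult_le_reg_l with a; [lra |].
  replace (a * (Rpower u a / a)) with (Rpower u a) by (field; lra); lra.
Qed.

Lemma ln_pow_le_Rpower (u : R) (k : nat) : 1 <= u -> (k <= 4)%nat ->
  ln u ^ k <= 32 ^ 4 * Rpower u (1 / 8).
Proof.
  intros Hu Hk.
  assert (HL : 0 <= ln u) by (rewrite <- ln_1; apply ln_le; lra).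
  assert (H1 : 1 <= Rpower u (1 / 8))
    by (rewrite <- (Rpower_O u) at 1 by lra; apply Rle_Rpower; lra).
  destruct (Rle_lt_dec (ln u) 1) as [Hle | Hgt].
  - assert (ln u ^ k <= 1 ^ k) by (apply pow_incr; lra).
    rewrite pow1 in *; lra.
  - assert (Hlog : ln u <= 32 * Rpower u (1 / 32))
      by (pose proof (ln_le_Rpower u (1 / 32) ltac:(lra) ltac:(lra)); lra).
    assert (E : Rpower u (1 / 32) ^ 4 = Rpower u (1 / 8)).
    { rewrite <- Rpower_pow by apply Rpower_pos.
      rewrite Rpower_mult; f_equal; simpl; field. }
    apply Rle_trans with (ln u ^ 4); [apply Rle_pow; [lra | exact Hk] |].
    rewrite <- E, <- Rpow_mult_distr; apply pow_incr; lra.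
Qed.

Lemma continuous_Rpower_shift (y q t : R) : 0 < t + y ->
  continuous (fun t => Rpower (t + y) q) t.
Proof.
  intros Ht; apply (ex_derive_continuous (fun t => Rpower (t + y) q)).
  unfold Rpower; auto_derive; lra.
Qed.

Lemma is_RInt_Rpower_shift (y p a b : R) : p <> 1 -> 0 < a + y -> 0 < b + y ->
  is_RInt (fun t => Rpower (t + y) (- p)) a b
    ((Rpower (b + y) (1 - p) - Rpower (a + y) (1 - p)) / (1 - p)).
Proof.
  intros Hp Ha Hb.
  replace ((Rpower (b + y) (1 - p) - Rpower (a + y) (1 - p)) / (1 - p))
    with (minus (Rpower (b + y) (1 - p) / (1 - p)) (Rpower (a + y) (1 - p) / (1 - p)))
    by (unfold minus, plus, opp; simpl; field; lra).
  apply (is_RInt_derive (fun t => Rpower (t + y) (1 - p) / (1 - p))).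
  - intros t Ht.
    assert (0 < t + y) by (destruct (Rle_dec a b);
      [rewrite Rmin_left, Rmax_right in Ht | rewrite Rmin_right, Rmax_left in Ht]; lra).
    unfold Rpower; auto_derive; [lra |].
    replace (- p * ln (t + y)) with ((1 - p) * ln (t + y) + - ln (t + y)) by ring.
    rewrite exp_plus, exp_Ropp, exp_ln by lra; field; lra.
  - intros t Ht.
    assert (0 < t + y) by (destruct (Rle_dec a b);
      [rewrite Rmin_left, Rmax_right in Ht | rewrite Rmin_right, Rmax_left in Ht]; lra).
    apply continuous_Rpower_shift; lra.
Qed.

Lemma is_lim_Rpower_shift_p_infty (y q : R) : q < 0 ->
  is_lim (fun t => Rpower (t + y) q) p_infty 0.
Proof.
  intros Hq; unfold Rpower.
  apply (is_lim_comp exp (fun t => q * ln (t + y)) p_infty 0 m_infty);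
    [exact is_lim_exp_m | | now exists 0].
  replace m_infty with (Rbar_mult q p_infty)
    by (simpl; destruct (Rle_dec 0 q); [exfalso; lra | reflexivity]).
  apply is_lim_scal_l.
  apply (is_lim_comp ln (fun t => t + y) p_infty p_infty p_infty);
    [exact is_lim_ln_p | | now exists 0].
  eapply is_lim_plus; [apply is_lim_id | apply is_lim_const | reflexivity].
Qed.

Lemma filterlim_RInt_of_is_RInt_gen (f : R -> R) (a l : R) :
  is_RInt_gen f (at_point a) (Rbar_locally p_infty) l ->
  filterlim (fun b => RInt f a b) (Rbar_locally p_infty) (locally l).
Proof.
  intros H P HP; destruct (H P HP) as [Q S HQ HS HQS]; unfold filtermap.
  apply (filter_imp S); [| exact HS]; intros b Hb.
  destruct (HQS a b HQ Hb) as [v [Hv Pv]]; simpl in Hv.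
  rewrite (is_RInt_unique f a b v Hv); exact Pv.
Qed.

Lemma is_RInt_gen_of_filterlim_RInt (f : R -> R) (a l : R) :
  (forall b, a <= b -> ex_RInt f a b) ->
  filterlim (fun b => RInt f a b) (Rbar_locally p_infty) (locally l) ->
  is_RInt_gen f (at_point a) (Rbar_locally p_infty) l.
Proof.
  intros Hex Hlim P HP; destruct (Hlim P HP) as [M HM].
  apply (Filter_prod _ _ _ (fun x => x = a) (fun b => Rmax M a < b));
    [reflexivity | now exists (Rmax M a) |].
  intros x b -> Hb; exists (RInt f a b); split.
  - apply (RInt_correct f a b), Hex; pose proof (Rmax_r M a); lra.
  - apply HM; pose proof (Rmax_l M a); lra.
Qed.

Lemma filterlim_p_infty_Cauchy (F g : R -> R) (M : R) :
  is_lim g p_infty 0 ->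
  (forall a b, M <= a <= b -> Rabs (F b - F a) <= g a) ->
  exists l, filterlim F (Rbar_locally p_infty) (locally l).
Proof.
  intros Hg HF.
  set (FF := filtermap F (Rbar_locally p_infty)).
  assert (Hproper : ProperFilter FF)
    by (apply filtermap_proper_filter, Rbar_locally_filter).
  assert (Hcauchy : cauchy FF).
  { intros eps; apply is_lim_spec in Hg; destruct (Hg eps) as [N HN].
    set (a := Rmax M N + 1).
    pose proof (Rmax_l M N); pose proof (Rmax_r M N).
    exists (F a), a; intros b Hb.
    specialize (HN a ltac:(unfold a; lra)); rewrite Rminus_0_r in HN.
    change (Rabs (F b - F a) < eps).
    apply Rle_lt_trans with (g a); [apply HF; split; [unfold a | ]; lra |].
    apply Rabs_def2 in HN; lra. }
  exists (lim FF); intros P [eps HP].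
  apply (filter_imp (ball (lim FF) eps)); [exact HP |].
  apply complete_cauchy; assumption.
Qed.

Lemma Rabs_RInt_le_Rpower_shift (f : R -> R) (y p C a b : R) :
  1 < p -> 0 < a + y -> a <= b -> ex_RInt f a b ->
  (forall t, a <= t <= b -> Rabs (f t) <= C * Rpower (t + y) (- p)) ->
  Rabs (RInt f a b) <= C / (p - 1) * (Rpower (a + y) (1 - p) - Rpower (b + y) (1 - p)).
Proof.
  intros Hp Ha Hab Hex Hf.
  apply (norm_RInt_le f (fun t => C * Rpower (t + y) (- p)) a b);
    [exact Hab | intros t Ht; apply Hf; lra | apply (RInt_correct f a b), Hex |].
  replace (C / (p - 1) * (Rpower (a + y) (1 - p) - Rpower (b + y) (1 - p)))
    with (scal C ((Rpower (b + y) (1 - p) - Rpower (a + y) (1 - p)) / (1 - p)))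
    by (unfold scal; simpl; unfold mult; simpl; field; lra).
  apply (is_RInt_scal (V := R_NormedModule)), is_RInt_Rpower_shift; lra.
Qed.

Lemma Rabs_lim_le_of_bound (F : R -> R) (l B M : R) :
  filterlim F (Rbar_locally p_infty) (locally l) ->
  (forall b, M <= b -> Rabs (F b) <= B) -> Rabs l <= B.
Proof.
  intros Hl HF.
  assert (Hev : Rbar_locally p_infty (fun b => - B <= F b <= B))
    by (exists M; intros b Hb; apply Rabs_le_between, HF; lra).
  apply Rabs_le; split.
  - change (Rbar_le (- B) l).
    apply (filterlim_le (F := Rbar_locally p_infty) (fun _ => - B) F);
      [apply (filter_imp _ _ (fun b Hb => proj1 Hb) Hev) | apply filterlim_const | exact Hl].
  - change (Rbar_le l B).
    apply (filterlim_le (F := Rbar_locally p_infty) F (fun _ => B));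
      [apply (filter_imp _ _ (fun b Hb => proj2 Hb) Hev) | exact Hl | apply filterlim_const].
Qed.

Lemma is_RInt_gen_Rpower_dominated (f : R -> R) (y p C : R) : 0 < y -> 1 < p ->
  (forall t, 0 <= t -> continuous f t) ->
  (forall t, 0 <= t -> Rabs (f t) <= C * Rpower (t + y) (- p)) ->
  exists l, is_RInt_gen f (at_point 0) (Rbar_locally p_infty) l /\
    Rabs l <= C / (p - 1) * Rpower y (1 - p).
Proof.
  intros Hy Hp Hc Hf.
  assert (HC : 0 <= C).
  { pose proof (Hf 0 (Rle_refl 0)); pose proof (Rabs_pos (f 0)).
    pose proof (Rpower_pos (0 + y) (- p)); nra. }
  assert (HCp : 0 <= C / (p - 1)) by (apply Rdiv_le_0_compat; lra).
  assert (Hex : forall a b, 0 <= a <= b -> ex_RInt f a b).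
  { intros a b Hab; apply (ex_RInt_continuous (V := R_CompleteNormedModule)).
    intros t Ht; rewrite Rmin_left in Ht by lra; apply Hc; lra. }
  assert (Htail : forall a b, 0 <= a <= b ->
    Rabs (RInt f a b) <= C / (p - 1) * (Rpower (a + y) (1 - p) - Rpower (b + y) (1 - p)))
    by (intros a b Hab; apply Rabs_RInt_le_Rpower_shift; try apply Hex; intros; try apply Hf; lra).
  destruct (filterlim_p_infty_Cauchy (fun b => RInt f 0 b)
              (fun a => C / (p - 1) * Rpower (a + y) (1 - p)) 0) as [l Hl].
  - replace (Finite 0) with (Rbar_mult (C / (p - 1)) 0) by (simpl; f_equal; ring).
    apply is_lim_scal_l, is_lim_Rpower_shift_p_infty; lra.
  - intros a b Hab.
    assert (E : RInt f 0 a + RInt f a b = RInt f 0 b)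
      by (apply (RInt_Chasles (V := R_CompleteNormedModule)); apply Hex; lra).
    replace (RInt f 0 b - RInt f 0 a) with (RInt f a b) by lra.
    pose proof (Rpower_pos (b + y) (1 - p)).
    eapply Rle_trans; [apply Htail; lra | nra].
  - exists l; split; [apply is_RInt_gen_of_filterlim_RInt; [intros; apply Hex; lra | exact Hl] |].
    assert (Hbound : forall b, 0 <= b -> Rabs (RInt f 0 b) <= C / (p - 1) * Rpower y (1 - p)).
    { intros b Hb; pose proof (Rpower_pos (b + y) (1 - p)).
      eapply Rle_trans; [apply Htail; lra |]; rewrite Rplus_0_l; nra. }
    apply (Rabs_lim_le_of_bound _ _ _ 0 Hl Hbound).
Qed.

(** * The Euler-Maclaurin remainder and its derivatives in s *)

Lemma is_derive_of_Taylor1_bound (F : R -> R) (s d C delta : R) : 0 < delta ->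
  (forall h, Rabs h <= delta -> Rabs (F (s + h) - F s - h * d) <= C * h ^ 2) ->
  is_derive F s d.
Proof.
  intros Hdelta HF; apply is_derive_Reals; intros eps Heps.
  set (K := Rabs C + 1).
  assert (HK : 0 < K) by (unfold K; pose proof (Rabs_pos C); lra).
  assert (Hm : 0 < Rmin delta (eps / K))
    by (apply Rmin_pos; [lra | apply Rdiv_lt_0_compat; lra]).
  exists (mkposreal _ Hm); intros h Hh0 Hh; simpl in Hh.
  pose proof (Rmin_l delta (eps / K)); pose proof (Rmin_r delta (eps / K)).
  specialize (HF h ltac:(lra)).
  assert (Hh' : 0 < Rabs h) by (apply Rabs_pos_lt; exact Hh0).
  assert (HKh : K * Rabs h < eps).
  { replace eps with (K * (eps / K)) by (field; lra).
    apply Rmult_lt_compat_l; lra. }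
  assert (Hsq : h ^ 2 = Rabs h * Rabs h)
    by (rewrite <- Rabs_mult, Rabs_right; [ring | apply Rle_ge; nra]).
  replace ((F (s + h) - F s) / h - d) with ((F (s + h) - F s - h * d) / h) by (field; exact Hh0).
  unfold Rdiv; rewrite Rabs_mult, Rabs_inv.
  apply Rmult_lt_reg_r with (Rabs h); [lra |].
  rewrite Rmult_assoc, Rinv_l, Rmult_1_r by lra.
  unfold K in HKh; rewrite Hsq in HF; pose proof (Rle_abs C); nra.
Qed.

(* [(- ln (t + y)) ^ k * (t + y) ^ (- s - 2)] is the k-th derivative of [(t + y) ^ (- s - 2)]
   with respect to s. *)
Definition remainder_integrand (k : nat) (s y t : R) : R :=
  B2per t * (- ln (t + y)) ^ k * Rpower (t + y) (- s - 2).

Definition remainder_integral (k : nat) (s y : R) : R :=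
  RInt_gen (remainder_integrand k s y) (at_point 0) (Rbar_locally p_infty).

Lemma continuous_remainder_integrand (k : nat) (s y t : R) : 0 < t + y ->
  continuous (remainder_integrand k s y) t.
Proof.
  intros Ht; unfold remainder_integrand.
  apply (continuous_mult (fun t => B2per t * (- ln (t + y)) ^ k)).
  - apply (continuous_mult B2per); [apply continuous_B2per |].
    apply (ex_derive_continuous (fun t => (- ln (t + y)) ^ k)); auto_derive; lra.
  - apply continuous_Rpower_shift; lra.
Qed.

Lemma Rabs_remainder_integrand_le (k : nat) (s y t : R) :
  1 <= y -> 0 <= t -> (k <= 4)%nat -> -3/4 <= s ->
  Rabs (remainder_integrand k s y t) <= 32 ^ 4 * Rpower (t + y) (- (9 / 8)).
Proof.
  intros Hy Ht Hk Hs; unfold remainder_integrand.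
  assert (HL : 0 <= ln (t + y)) by (rewrite <- ln_1; apply ln_le; lra).
  rewrite !Rabs_mult, <- RPow_abs, Rabs_Ropp, (Rabs_right (ln (t + y))) by lra.
  rewrite (Rabs_right (Rpower _ _)) by (left; apply Rpower_pos).
  pose proof (Rabs_B2per_le t); pose proof (Rabs_pos (B2per t)).
  pose proof (ln_pow_le_Rpower (t + y) k ltac:(lra) Hk).
  pose proof (pow_le (ln (t + y)) k HL).
  pose proof (Rpower_pos (t + y) (- s - 2)).
  assert (Hexp : Rpower (t + y) (1 / 8) * Rpower (t + y) (- s - 2) <= Rpower (t + y) (- (9 / 8))).
  { rewrite <- Rpower_plus; apply Rle_Rpower; lra. }
  pose proof (Rpower_pos (t + y) (1 / 8)).
  apply Rle_trans with (1 * (32 ^ 4 * Rpower (t + y) (1 / 8)) * Rpower (t + y) (- s - 2)).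
  - apply Rmult_le_compat_r; [lra |]; apply Rmult_le_compat; lra.
  - lra.
Qed.

Lemma is_RInt_gen_remainder_integral (k : nat) (s y : R) :
  1 <= y -> (k <= 4)%nat -> -3/4 <= s ->
  is_RInt_gen (remainder_integrand k s y) (at_point 0) (Rbar_locally p_infty)
    (remainder_integral k s y).
Proof.
  intros Hy Hk Hs.
  destruct (is_RInt_gen_Rpower_dominated (remainder_integrand k s y) y (9 / 8) (32 ^ 4))
    as [l [Hl _]]; try lra.
  - intros t Ht; apply continuous_remainder_integrand; lra.
  - intros t Ht; apply Rabs_remainder_integrand_le; auto.
  - unfold remainder_integral; rewrite (is_RInt_gen_unique _ l Hl); exact Hl.
Qed.

Lemma remainder_integrand_Taylor1 (k : nat) (s h y t : R) : 1 <= y -> 0 <= t ->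
  Rabs (remainder_integrand k (s + h) y t - remainder_integrand k s y t
        - h * remainder_integrand (S k) s y t)
  <= h ^ 2 * Rabs (remainder_integrand (k + 2) (s - Rabs h) y t).
Proof.
  intros Hy Ht; unfold remainder_integrand, Rpower.
  set (L := ln (t + y)).
  assert (HL : 0 <= L) by (unfold L; rewrite <- ln_1; apply ln_le; lra).
  set (E := exp ((- s - 2) * L)).
  assert (E1 : exp ((- (s + h) - 2) * L) = E * exp (- h * L))
    by (unfold E; rewrite <- exp_plus; f_equal; ring).
  assert (E2 : exp ((- (s - Rabs h) - 2) * L) = E * exp (Rabs (- h * L))).
  { unfold E; rewrite <- exp_plus, Rabs_mult, Rabs_Ropp, (Rabs_right L) by lra.
    f_equal; ring. }
  rewrite E1, E2, pow_add.
  replace (B2per t * (- L) ^ k * (E * exp (- h * L)) - B2per t * (- L) ^ k * E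
           - h * (B2per t * (- L) ^ S k * E))
    with (B2per t * (- L) ^ k * E * (exp (- h * L) - 1 - - h * L)) by (simpl; ring).
  replace (h ^ 2 * Rabs (B2per t * ((- L) ^ k * (- L) ^ 2) * (E * exp (Rabs (- h * L)))))
    with (Rabs (B2per t * (- L) ^ k * E) * ((- h * L) ^ 2 * exp (Rabs (- h * L)))).
  - rewrite Rabs_mult; apply Rmult_le_compat_l; [apply Rabs_pos | apply Rabs_exp_sub_1_sub_le].
  - rewrite !Rabs_mult, (Rabs_right (exp _)), (Rabs_right ((- L) ^ 2))
      by (apply Rle_ge; try apply pow2_ge_0; left; apply exp_pos).
    ring.
Qed.

Lemma remainder_integral_Taylor1 (k : nat) (s h y : R) :
  1 <= y -> (k <= 2)%nat -> -1/2 <= s <= 1/2 -> Rabs h <= 1/4 ->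
  Rabs (remainder_integral k (s + h) y - remainder_integral k s y
        - h * remainder_integral (S k) s y) <= 8 * 32 ^ 4 * h ^ 2.
Proof.
  intros Hy Hk Hs Hh; apply Rabs_le_between in Hh.
  pose proof (Rabs_pos h) as Hh0.
  assert (Hh1 : Rabs h <= 1 / 4) by (apply Rabs_le; lra).
  set (J := remainder_integral); set (f := remainder_integrand).
  pose proof (is_RInt_gen_remainder_integral k (s + h) y Hy ltac:(lia) ltac:(lra)) as H1.
  pose proof (is_RInt_gen_remainder_integral k s y Hy ltac:(lia) ltac:(lra)) as H2.
  pose proof (is_RInt_gen_remainder_integral (S k) s y Hy ltac:(lia) ltac:(lra)) as H3.
  pose proof (is_RInt_gen_minus _ _ _ _ (is_RInt_gen_minus _ _ _ _ H1 H2)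
                (is_RInt_gen_scal _ h _ H3)) as Hint.
  destruct (is_RInt_gen_Rpower_dominated
              (fun t => f k (s + h) y t - f k s y t - h * f (S k) s y t) y (9 / 8) (h ^ 2 * 32 ^ 4))
    as [l [Hl Hlb]]; try lra.
  - intros t Ht; apply (continuous_minus (fun t => f k (s + h) y t - f k s y t)).
    + apply (continuous_minus (f k (s + h) y)); apply continuous_remainder_integrand; lra.
    + apply (continuous_scal_r h (f (S k) s y)), continuous_remainder_integrand; lra.
  - intros t Ht; eapply Rle_trans; [apply remainder_integrand_Taylor1; auto |].
    rewrite Rmult_assoc; apply Rmult_le_compat_l; [apply pow2_ge_0 |].
    apply Rabs_remainder_integrand_le; auto; [lia | lra].
  - replace (J k (s + h) y - J k s y - h * J (S k) s y) with l
      by (rewrite <- (is_RInt_gen_unique _ l Hl); apply is_RInt_gen_unique; exact Hint).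
    assert (Hy8 : Rpower y (1 - 9 / 8) <= 1)
      by (rewrite <- (Rpower_O y) at 2 by lra; apply Rle_Rpower; lra).
    pose proof (pow2_ge_0 h).
    replace (h ^ 2 * 32 ^ 4 / (9 / 8 - 1)) with (8 * 32 ^ 4 * h ^ 2) in Hlb by field.
    pose proof (Rpower_pos y (1 - 9 / 8)); nra.
Qed.

Lemma is_derive_remainder_integral (k : nat) (s y : R) :
  1 <= y -> (k <= 2)%nat -> -1/2 <= s <= 1/2 ->
  is_derive (fun s => remainder_integral k s y) s (remainder_integral (S k) s y).
Proof.
  intros Hy Hk Hs.
  apply (is_derive_of_Taylor1_bound _ s _ (8 * 32 ^ 4) (1 / 4)); [lra |].
  intros h Hh; apply remainder_integral_Taylor1; assumption.
Qed.

(** * The shift rule and the asymptotics of zeta''(0, y) *)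

Definition em_main (s y : R) : R :=
  Rpower y (1 - s) / (s - 1) + Rpower y (- s) / 2 + s * Rpower y (- s - 1) / 12.

Lemma hurwitz_zeta_split (s y : R) :
  hurwitz_zeta s y = em_main s y - s * (s + 1) / 2 * remainder_integral 0 s y.
Proof.
  unfold hurwitz_zeta, em_main, remainder_integral; do 3 f_equal.
  apply functional_extensionality; intros t; unfold remainder_integrand; simpl; ring.
Qed.

Lemma remainder_integrand_add1 (k : nat) (s y t : R) :
  remainder_integrand k s y (t + 1) = remainder_integrand k s (y + 1) t.
Proof.
  unfold remainder_integrand; rewrite B2per_add1.
  replace (t + 1 + y) with (t + (y + 1)) by ring; reflexivity.
Qed.

Lemma ex_RInt_remainder_integrand (k : nat) (s y a b : R) : 0 < a + y -> 0 < b + y ->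
  ex_RInt (remainder_integrand k s y) a b.
Proof.
  intros Ha Hb; apply (ex_RInt_continuous (V := R_CompleteNormedModule)); intros t Ht.
  apply continuous_remainder_integrand.
  destruct (Rle_dec a b); [rewrite Rmin_left in Ht | rewrite Rmin_right in Ht]; lra.
Qed.

Lemma RInt_remainder_integrand_shift (k : nat) (s y b : R) : 0 < y -> 1 <= b ->
  RInt (remainder_integrand k s y) 0 b
  = RInt (remainder_integrand k s y) 0 1 + RInt (remainder_integrand k s (y + 1)) 0 (b - 1).
Proof.
  intros Hy Hb.
  rewrite <- (RInt_Chasles (V := R_CompleteNormedModule) _ 0 1 b)
    by (apply ex_RInt_remainder_integrand; lra).
  change (plus ?u ?v) with (u + v); f_equal.
  assert (H : is_RInt (remainder_integrand k s y) (1 * 0 + 1) (1 * (b - 1) + 1)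
                (RInt (remainder_integrand k s y) 1 b)).
  { replace (1 * 0 + 1) with 1 by ring; replace (1 * (b - 1) + 1) with b by ring.
    apply (RInt_correct (remainder_integrand k s y)), ex_RInt_remainder_integrand; lra. }
  apply is_RInt_comp_lin in H.
  symmetry; apply is_RInt_unique; eapply is_RInt_ext; [| exact H].
  intros t _; unfold scal; simpl; unfold mult; simpl.
  rewrite Rmult_1_l, Rmult_1_l, remainder_integrand_add1; reflexivity.
Qed.

Lemma remainder_integral_shift (k : nat) (s y : R) : 0 < y -> (k <= 4)%nat -> -3/4 <= s ->
  remainder_integral k s y
  = RInt (remainder_integrand k s y) 0 1 + remainder_integral k s (y + 1).
Proof.
  intros Hy Hk Hs; apply is_RInt_gen_unique, is_RInt_gen_of_filterlim_RInt.
  { intros b Hb; apply ex_RInt_remainder_integrand; lra. }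
  apply filterlim_ext_loc with (fun b => RInt (remainder_integrand k s y) 0 1
                                         + RInt (remainder_integrand k s (y + 1)) 0 (b - 1)).
  { exists 1; intros b Hb; symmetry; apply RInt_remainder_integrand_shift; lra. }
  set (I1 := RInt (remainder_integrand k s y) 0 1).
  change (is_lim (fun b => I1 + RInt (remainder_integrand k s (y + 1)) 0 (b - 1)) p_infty
            (I1 + remainder_integral k s (y + 1))).
  apply (is_lim_plus _ _ p_infty I1
           (remainder_integral k s (y + 1))); [apply is_lim_const | | reflexivity].
  apply (filterlim_comp _ _ _ (fun b => b - 1) (fun b => RInt (remainder_integrand k s (y + 1)) 0 b)
           _ (Rbar_locally p_infty)).
  - intros P [M HM]; exists (M + 1); intros b Hb; apply HM; lra.
  - apply filterlim_RInt_of_is_RInt_gen, is_RInt_gen_remainder_integral; [lra | exact Hk | lra].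
Qed.

(* Obtained by integrating by parts twice; on [0, 1] the function B2per is a polynomial. *)
Definition remainder_unit_primitive (s y t : R) : R :=
  1 / 2 * Rpower (t + y) (- s - 2) *
  ((t ^ 2 - t + 1 / 6) * (- s) * (t + y) - (2 * t - 1) * (t + y) ^ 2 + 2 * (t + y) ^ 3 / (1 - s)).

Lemma RInt_remainder_integrand_unit (s y : R) : 0 < y -> s <> 1 ->
  s * (s + 1) / 2 * RInt (remainder_integrand 0 s y) 0 1
  = remainder_unit_primitive s y 1 - remainder_unit_primitive s y 0.
Proof.
  intros Hy Hs.
  assert (H : is_RInt (fun t => s * (s + 1) / 2 * remainder_integrand 0 s y t) 0 1
                (remainder_unit_primitive s y 1 - remainder_unit_primitive s y 0)).
  { apply (is_RInt_derive (remainder_unit_primitive s y)).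
    - intros t Ht; rewrite Rmin_left, Rmax_right in Ht by lra.
      unfold remainder_unit_primitive, remainder_integrand; rewrite B2per_unit by lra.
      unfold Rpower; auto_derive; [lra |]; field; lra.
    - intros t Ht; rewrite Rmin_left, Rmax_right in Ht by lra.
      apply (continuous_scal_r (s * (s + 1) / 2) (remainder_integrand 0 s y)).
      apply continuous_remainder_integrand; lra. }
  rewrite <- (is_RInt_unique _ _ _ _ H); symmetry; apply is_RInt_unique.
  apply (is_RInt_scal (V := R_NormedModule)), (RInt_correct (remainder_integrand 0 s y)).
  apply ex_RInt_remainder_integrand; lra.
Qed.

Lemma hurwitz_zeta_add1 (s y : R) : 0 < y -> -3/4 <= s -> s <> 1 ->
  hurwitz_zeta s y = Rpower y (- s) + hurwitz_zeta s (y + 1).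
Proof.
  intros Hy Hs Hs1.
  rewrite !hurwitz_zeta_split, (remainder_integral_shift 0 s y) by (lia || lra).
  rewrite Rmult_plus_distr_l, RInt_remainder_integrand_unit by lra.
  unfold em_main, remainder_unit_primitive.
  replace (1 + y) with (y + 1) by ring; replace (0 + y) with y by ring.
  assert (E : forall z m, 0 < z -> Rpower z (- s - 2 + INR m) = Rpower z (- s - 2) * z ^ m)
    by (intros; rewrite Rpower_plus, Rpower_pow by lra; reflexivity).
  assert (E3 : forall z, 0 < z -> Rpower z (1 - s) = Rpower z (- s - 2) * z ^ 3)
    by (intros z Hz; rewrite <- E by exact Hz; f_equal; simpl; ring).
  assert (E2 : forall z, 0 < z -> Rpower z (- s) = Rpower z (- s - 2) * z ^ 2)
    by (intros z Hz; rewrite <- E by exact Hz; f_equal; simpl; ring).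
  assert (E1 : forall z, 0 < z -> Rpower z (- s - 1) = Rpower z (- s - 2) * z ^ 1)
    by (intros z Hz; rewrite <- E by exact Hz; f_equal; simpl; ring).
  rewrite (E3 y), (E3 (y + 1)), (E2 y), (E2 (y + 1)), (E1 y), (E1 (y + 1)) by lra.
  field; lra.
Qed.

Lemma Derive_n_2_of_is_derive (f f1 : R -> R) (x v delta : R) : 0 < delta ->
  (forall s, Rabs (s - x) < delta -> is_derive f s (f1 s)) -> is_derive f1 x v ->
  Derive_n f 2 x = v.
Proof.
  intros Hdelta Hf Hf1; simpl.
  rewrite (Derive_ext_loc (Derive (fun s => f s)) f1); [exact (is_derive_unique _ _ _ Hf1) |].
  exists (mkposreal delta Hdelta); intros s Hs; apply is_derive_unique, Hf, Hs.
Qed.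

(* Coquelicot's [is_derive_minus] and [is_derive_mult] are stated over normed modules, whose
   [minus] and [mult] do not unify syntactically with [Rminus] and [Rmult]. *)
Lemma is_derive_Rminus (f g : R -> R) (x df dg : R) :
  is_derive f x df -> is_derive g x dg -> is_derive (fun t => f t - g t) x (df - dg).
Proof. intros Hf Hg; apply (is_derive_minus f g x df dg Hf Hg). Qed.

Lemma is_derive_Rmult (f g : R -> R) (x df dg : R) :
  is_derive f x df -> is_derive g x dg ->
  is_derive (fun t => f t * g t) x (df * g x + f x * dg).
Proof. intros Hf Hg; apply (is_derive_mult f g x df dg Hf Hg), Rmult_comm. Qed.

Definition em_main_ds (s y : R) : R :=
  - ln y * Rpower y (1 - s) / (s - 1) - Rpower y (1 - s) / (s - 1) ^ 2
  - ln y * Rpower y (- s) / 2 + (1 - s * ln y) * Rpower y (- s - 1) / 12.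

Definition em_main2_at0 (y : R) : R :=
  - y * (ln y ^ 2 - 2 * ln y + 2) + ln y ^ 2 / 2 - ln y / (6 * y).

Lemma is_derive_em_main (s y : R) : 0 < y -> s <> 1 ->
  is_derive (fun s => em_main s y) s (em_main_ds s y).
Proof.
  intros Hy Hs; unfold em_main, em_main_ds, Rpower; auto_derive; [lra |].
  replace (1 + - s) with (1 - s) by ring; replace (- s + - (1)) with (- s - 1) by ring.
  field; lra.
Qed.

Lemma is_derive_em_main_ds (y : R) : 0 < y ->
  is_derive (fun s => em_main_ds s y) 0 (em_main2_at0 y).
Proof.
  intros Hy; unfold em_main_ds, em_main2_at0, Rpower; auto_derive; [repeat split; lra |].
  replace ((1 + - 0) * ln y) with (ln y) by ring; replace (- 0 * ln y) with 0 by ring.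
  replace ((- 0 + - (1)) * ln y) with (- ln y) by ring.
  rewrite exp_0, exp_Ropp, exp_ln by lra; field; lra.
Qed.

Definition hurwitz_zeta_ds (s y : R) : R :=
  em_main_ds s y - (2 * s + 1) / 2 * remainder_integral 0 s y
  - s * (s + 1) / 2 * remainder_integral 1 s y.

Lemma is_derive_hurwitz_zeta (s y : R) : 1 <= y -> -1/2 <= s <= 1/2 ->
  is_derive (fun s => hurwitz_zeta s y) s (hurwitz_zeta_ds s y).
Proof.
  intros Hy Hs.
  apply (is_derive_ext (fun s => em_main s y - s * (s + 1) / 2 * remainder_integral 0 s y));
    [intros; symmetry; apply hurwitz_zeta_split |].
  unfold hurwitz_zeta_ds.
  replace (em_main_ds s y - (2 * s + 1) / 2 * remainder_integral 0 s y
           - s * (s + 1) / 2 * remainder_integral 1 s y)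
    with (em_main_ds s y - ((2 * s + 1) / 2 * remainder_integral 0 s y
           + s * (s + 1) / 2 * remainder_integral 1 s y)) by ring.
  apply (is_derive_Rminus (fun s => em_main s y)); [apply is_derive_em_main; lra |].
  apply (is_derive_Rmult (fun s => s * (s + 1) / 2) (fun s => remainder_integral 0 s y));
    [auto_derive; [auto | field] |].
  apply is_derive_remainder_integral; [lra | lia | lra].
Qed.

Lemma is_derive_hurwitz_zeta_ds (y : R) : 1 <= y ->
  is_derive (fun s => hurwitz_zeta_ds s y) 0
    (em_main2_at0 y - remainder_integral 0 0 y - remainder_integral 1 0 y).
Proof.
  intros Hy; unfold hurwitz_zeta_ds.
  replace (em_main2_at0 y - remainder_integral 0 0 y - remainder_integral 1 0 y) with
    (em_main2_at0 y
     - (2 / 2 * remainder_integral 0 0 y + (2 * 0 + 1) / 2 * remainder_integral 1 0 y)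
     - ((2 * 0 + 1) / 2 * remainder_integral 1 0 y + 0 * (0 + 1) / 2 * remainder_integral 2 0 y))
    by field.
  apply is_derive_Rminus; [apply is_derive_Rminus |].
  - apply is_derive_em_main_ds; lra.
  - apply (is_derive_Rmult (fun s => (2 * s + 1) / 2) (fun s => remainder_integral 0 s y));
      [auto_derive; [auto | field] | apply is_derive_remainder_integral; [lra | lia | lra]].
  - apply (is_derive_Rmult (fun s => s * (s + 1) / 2) (fun s => remainder_integral 1 s y));
      [auto_derive; [auto | field] | apply is_derive_remainder_integral; [lra | lia | lra]].
Qed.

Lemma hurwitz_zeta2_at0_eq (y : R) : 1 <= y ->
  hurwitz_zeta2_at0 y = em_main2_at0 y - remainder_integral 0 0 y - remainder_integral 1 0 y.
Proof.
  intros Hy; unfold hurwitz_zeta2_at0.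
  apply (Derive_n_2_of_is_derive _ (fun s => hurwitz_zeta_ds s y) 0 _ (1 / 2)); [lra | |].
  - intros s Hs; apply Rabs_def2 in Hs; apply is_derive_hurwitz_zeta; lra.
  - apply is_derive_hurwitz_zeta_ds; exact Hy.
Qed.

Lemma hurwitz_zeta2_at0_add1 (y : R) : 0 < y ->
  hurwitz_zeta2_at0 y = ln y ^ 2 + hurwitz_zeta2_at0 (y + 1).
Proof.
  intros Hy; rewrite (hurwitz_zeta2_at0_eq (y + 1)) by lra; unfold hurwitz_zeta2_at0.
  rewrite (Derive_n_ext_loc _ (fun s => Rpower y (- s) + hurwitz_zeta s (y + 1))).
  - apply (Derive_n_2_of_is_derive _ (fun s => - ln y * Rpower y (- s) + hurwitz_zeta_ds s (y + 1))
             0 _ (1 / 2)); [lra | |].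
    + intros s Hs; apply Rabs_def2 in Hs.
      apply (is_derive_plus (fun s => Rpower y (- s))); [unfold Rpower; auto_derive; auto; ring |].
      apply is_derive_hurwitz_zeta; lra.
    + apply (is_derive_plus (fun s => - ln y * Rpower y (- s))).
      * unfold Rpower; auto_derive; auto.
        replace (- 0 * ln y) with 0 by ring; rewrite exp_0; ring.
      * apply is_derive_hurwitz_zeta_ds; lra.
  - exists (mkposreal (1 / 2) ltac:(lra)); intros s Hs.
    change (Rabs (s - 0) < 1 / 2) in Hs; apply Rabs_def2 in Hs.
    apply hurwitz_zeta_add1; lra.
Qed.

Lemma Rabs_remainder_integrand_01_le (y t : R) : 1 <= y -> 0 <= t ->
  Rabs (remainder_integrand 0 0 y t + remainder_integrand 1 0 y t)
  <= 5 / 6 * Rpower (t + y) (- (7 / 4)).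
Proof.
  intros Hy Ht; unfold remainder_integrand; simpl.
  assert (HL : 0 <= ln (t + y)) by (rewrite <- ln_1; apply ln_le; lra).
  pose proof (ln_le_Rpower (t + y) (1 / 4) ltac:(lra) ltac:(lra)).
  assert (Hge1 : 1 <= Rpower (t + y) (1 / 4))
    by (rewrite <- (Rpower_O (t + y)) at 1 by lra; apply Rle_Rpower; lra).
  assert (E : Rpower (t + y) (1 / 4) * Rpower (t + y) (- 0 - 2) = Rpower (t + y) (- (7 / 4)))
    by (rewrite <- Rpower_plus; f_equal; field).
  replace (B2per t * 1 * Rpower (t + y) (- 0 - 2)
           + B2per t * (- ln (t + y) * 1) * Rpower (t + y) (- 0 - 2))
    with (B2per t * (1 - ln (t + y)) * Rpower (t + y) (- 0 - 2)) by ring.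
  rewrite !Rabs_mult, (Rabs_right (Rpower _ _)) by (left; apply Rpower_pos).
  pose proof (Rabs_B2per_le t); pose proof (Rabs_pos (B2per t)).
  assert (Rabs (1 - ln (t + y)) <= 5 * Rpower (t + y) (1 / 4)) by (apply Rabs_le; lra).
  pose proof (Rabs_pos (1 - ln (t + y))); pose proof (Rpower_pos (t + y) (- 0 - 2)).
  rewrite <- E.
  apply Rle_trans with (1 / 6 * (5 * Rpower (t + y) (1 / 4)) * Rpower (t + y) (- 0 - 2));
    [apply Rmult_le_compat_r; [lra | apply Rmult_le_compat; lra] | lra].
Qed.

Lemma Rabs_hurwitz_zeta2_at0_sub_main_le (y : R) : 1 <= y ->
  Rabs (hurwitz_zeta2_at0 y - em_main2_at0 y) <= 2 * Rpower y (- (3 / 4)).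
Proof.
  intros Hy.
  pose proof (is_RInt_gen_remainder_integral 0 0 y Hy ltac:(lia) ltac:(lra)) as HJ0.
  pose proof (is_RInt_gen_remainder_integral 1 0 y Hy ltac:(lia) ltac:(lra)) as HJ1.
  pose proof (is_RInt_gen_plus _ _ _ _ HJ0 HJ1) as Hsum.
  destruct (is_RInt_gen_Rpower_dominated
              (fun t => remainder_integrand 0 0 y t + remainder_integrand 1 0 y t)
              y (7 / 4) (5 / 6))
    as [l [Hl Hlb]]; try lra.
  - intros t Ht; apply (continuous_plus (remainder_integrand 0 0 y));
      apply continuous_remainder_integrand; lra.
  - intros t Ht; apply Rabs_remainder_integrand_01_le; assumption.
  - assert (E : l = plus (remainder_integral 0 0 y) (remainder_integral 1 0 y))
      by (rewrite <- (is_RInt_gen_unique _ l Hl); apply is_RInt_gen_unique; exact Hsum).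
    change (plus ?u ?v) with (u + v) in E.
    rewrite hurwitz_zeta2_at0_eq by exact Hy.
    replace (em_main2_at0 y - remainder_integral 0 0 y - remainder_integral 1 0 y - em_main2_at0 y)
      with (- l) by (rewrite E; ring).
    rewrite Rabs_Ropp; eapply Rle_trans; [exact Hlb |].
    replace (5 / 6 / (7 / 4 - 1)) with (10 / 9) by field.
    replace (1 - 7 / 4) with (- (3 / 4)) by field.
    pose proof (Rpower_pos y (- (3 / 4))); lra.
Qed.

(** * Reduction to logarithmic sums *)

Lemma ln_shift_bounds (c u : R) : 0 < c -> 0 < u ->
  0 <= ln (u + c) - ln u <= c / u /\ c <= (u + c) * (ln (u + c) - ln u) <= c + c ^ 2 / u.
Proof.
  intros Hc Hu.
  assert (Hv : 0 < c / u) by (apply Rdiv_lt_0_compat; lra).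
  replace (ln (u + c) - ln u) with (ln (1 + c / u))
    by (replace (u + c) with (u * (1 + c / u)) by (field; lra); rewrite ln_mult by lra; ring).
  destruct (ln_1_plus_bounds (c / u) ltac:(lra)) as [H1 H2].
  replace (c / u / (1 + c / u)) with (c / (u + c)) in H1 by (field; lra).
  assert (0 < c / (u + c)) by (apply Rdiv_lt_0_compat; lra).
  assert (E1 : (u + c) * (c / (u + c)) = c) by (field; lra).
  assert (E2 : (u + c) * (c / u) = c + c ^ 2 / u) by (field; lra).
  split; [lra | split; [rewrite <- E1 at 1 | rewrite <- E2]; apply Rmult_le_compat_l; lra].
Qed.

Lemma Rpower_neg_le (a b c : R) : 0 < a <= b -> 0 <= c -> Rpower b (- c) <= Rpower a (- c).
Proof.
  intros Hab Hc; rewrite !Rpower_Ropp.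
  apply Rinv_le_contravar; [apply Rpower_pos | apply Rle_Rpower_l; lra].
Qed.

Lemma Rinv_le_Rpower_34 (u : R) : 1 <= u -> / u <= Rpower u (- (3 / 4)).
Proof.
  intros Hu; rewrite <- (Rpower_1 u) at 1 by lra; rewrite <- Rpower_Ropp.
  apply Rle_Rpower; lra.
Qed.

Lemma ln_div_le_Rpower_34 (u : R) : 1 <= u -> ln u / u <= 4 * Rpower u (- (3 / 4)).
Proof.
  intros Hu; pose proof (ln_le_Rpower u (1 / 4) ltac:(lra) ltac:(lra)).
  assert (E : Rpower u (1 / 4) * / u = Rpower u (- (3 / 4))).
  { rewrite <- (Rpower_1 u) at 2 by lra.
    rewrite <- Rpower_Ropp, <- Rpower_plus; f_equal; field. }
  rewrite <- E; unfold Rdiv.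
  assert (0 < / u) by (apply Rinv_0_lt_compat; lra); nra.
Qed.

Definition dup_main_approx (u : R) : R :=
  2 * ln 2 ^ 2 * u + 4 * ln 2 * u * ln u - 4 * ln 2 * u - ln 2 * ln u - ln 2 ^ 2 / 2.

Lemma dup_main_sub_approx_eq (u : R) : 0 < u ->
  let L := ln u in let d := ln (u + 1 / 2) - ln u in
  em_main2_at0 u + em_main2_at0 (u + 1 / 2) - em_main2_at0 (2 * u) - dup_main_approx u
  = (L - 1) * (1 - 2 * (u + 1 / 2) * d) + L * d - u * d ^ 2 - L / (6 * u)
    - (L + d) / (6 * (u + 1 / 2)) + (L + ln 2) / (12 * u).
Proof.
  intros Hu L d; unfold em_main2_at0, dup_main_approx.
  rewrite ln_mult by lra; fold L.
  replace (ln (u + 1 / 2)) with (L + d) by (unfold d, L; ring).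
  field; lra.
Qed.

Lemma Rabs_dup_main_sub_approx_le (u : R) : 1 <= u ->
  Rabs (em_main2_at0 u + em_main2_at0 (u + 1 / 2) - em_main2_at0 (2 * u) - dup_main_approx u)
  <= 2 * ((1 + ln u) / u).
Proof.
  intros Hu; rewrite dup_main_sub_approx_eq by lra; cbv zeta.
  set (d := ln (u + 1 / 2) - ln u); set (L := ln u); set (w := / u).
  assert (HL : 0 <= L) by (unfold L; rewrite <- ln_1; apply ln_le; lra).
  assert (Hw : 0 < w <= 1) by (unfold w; split;
    [apply Rinv_0_lt_compat | rewrite <- Rinv_1; apply Rinv_le_contravar]; lra).
  assert (Huw : u * w = 1) by (unfold w; field; lra).
  destruct (ln_shift_bounds (1 / 2) u ltac:(lra) ltac:(lra)) as [[Hd0 Hd1] [Hd2 Hd3]].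
  fold d in Hd0, Hd1, Hd2, Hd3.
  replace (1 / 2 / u) with (w / 2) in Hd1 by (unfold w; field; lra).
  replace (1 / 2 + (1 / 2) ^ 2 / u) with (1 / 2 + w / 4) in Hd3 by (unfold w; field; lra).
  pose proof ln_2_bounds.
  assert (T1 : Rabs ((L - 1) * (1 - 2 * (u + 1 / 2) * d)) <= (L + 1) * (w / 2)).
  { rewrite Rabs_mult; apply Rmult_le_compat; try apply Rabs_pos; apply Rabs_le; lra. }
  assert (T2 : 0 <= L * d <= L * (w / 2)) by (split; nra).
  assert (T3 : 0 <= u * d ^ 2 <= w / 4).
  { assert (d ^ 2 <= (w / 2) ^ 2) by (apply pow_incr; lra).
    split; [nra |]; replace (w / 4) with (u * (w / 2) ^ 2) by (field_simplify; nra); nra. }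
  assert (T4 : L / (6 * u) = L * w / 6) by (unfold w; field; lra).
  assert (T5 : 0 <= (L + d) / (6 * (u + 1 / 2)) <= (L + 1 / 2) * w / 6).
  { split; [apply Rdiv_le_0_compat; lra |].
    apply Rle_trans with ((L + d) * w / 6).
    - unfold Rdiv; rewrite Rinv_mult.
      assert (/ (u + 1 / 2) <= w) by (apply Rinv_le_contravar; lra).
      assert (0 < / (u + 1 / 2)) by (apply Rinv_0_lt_compat; lra).
      assert (0 < / 6) by lra; nra.
    - assert (0 < w / 6) by lra; nra. }
  assert (T6 : 0 <= (L + ln 2) / (12 * u) <= (L + 1) * w / 12).
  { replace ((L + ln 2) / (12 * u)) with ((L + ln 2) * w / 12) by (unfold w; field; lra).
    split; nra. }
  replace ((1 + L) / u) with ((1 + L) * w) by (unfold w; field; lra).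
  apply Rabs_le_between in T1.
  rewrite T4; pose proof (Rmult_le_pos L w HL ltac:(lra)).
  apply Rabs_le; split; lra.
Qed.

Definition dup_defect (u : R) : R :=
  hurwitz_zeta2_at0 u + hurwitz_zeta2_at0 (u + 1 / 2) - hurwitz_zeta2_at0 (2 * u).

Lemma Rabs_dup_defect_sub_approx_le (u : R) : 1 <= u ->
  Rabs (dup_defect u - dup_main_approx u) <= 16 * Rpower u (- (3 / 4)).
Proof.
  intros Hu; unfold dup_defect.
  pose proof (Rabs_hurwitz_zeta2_at0_sub_main_le u Hu) as H1.
  pose proof (Rabs_hurwitz_zeta2_at0_sub_main_le (u + 1 / 2) ltac:(lra)) as H2.
  pose proof (Rabs_hurwitz_zeta2_at0_sub_main_le (2 * u) ltac:(lra)) as H3.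
  pose proof (Rabs_dup_main_sub_approx_le u Hu) as H4.
  pose proof (Rpower_neg_le u (u + 1 / 2) (3 / 4) ltac:(lra) ltac:(lra)).
  pose proof (Rpower_neg_le u (2 * u) (3 / 4) ltac:(lra) ltac:(lra)).
  pose proof (Rinv_le_Rpower_34 u Hu); pose proof (ln_div_le_Rpower_34 u Hu).
  replace ((1 + ln u) / u) with (/ u + ln u / u) in H4 by (field; lra).
  apply Rabs_le_between in H1, H2, H3, H4; apply Rabs_le; lra.
Qed.

Definition dup_pair_target (n : R) : R :=
  4 * n * ln 2 ^ 2 + 8 * n * ln 2 * ln n - 8 * n * ln 2.

Lemma Rabs_dup_approx_pair_sub_le (x n : R) : 0 < x < 1 / 2 -> 1 <= n ->
  Rabs (dup_main_approx (x + n) + dup_main_approx (1 / 2 - x + n) - dup_pair_target n) <= 3 / n.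
Proof.
  intros Hx Hn.
  destruct (ln_shift_bounds x n ltac:(lra) ltac:(lra)) as [[A1 A2] [A3 A4]].
  destruct (ln_shift_bounds (1 / 2 - x) n ltac:(lra) ltac:(lra)) as [[B1 B2] [B3 B4]].
  replace (n + x) with (x + n) in * by ring.
  replace (n + (1 / 2 - x)) with (1 / 2 - x + n) in * by ring.
  set (d1 := ln (x + n) - ln n) in *; set (d2 := ln (1 / 2 - x + n) - ln n) in *.
  replace (dup_main_approx (x + n) + dup_main_approx (1 / 2 - x + n) - dup_pair_target n)
    with (4 * ln 2 * (((x + n) * d1 - x) + ((1 / 2 - x + n) * d2 - (1 / 2 - x)))
          - ln 2 * (d1 + d2)).
  2:{ unfold dup_main_approx, dup_pair_target.
      replace (ln (x + n)) with (ln n + d1) by (unfold d1; ring).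
      replace (ln (1 / 2 - x + n)) with (ln n + d2) by (unfold d2; ring).
      field. }
  pose proof ln_2_bounds.
  assert (Hw : 0 < / n) by (apply Rinv_0_lt_compat; lra).
  unfold Rdiv in *; set (w := / n) in *.
  assert (x ^ 2 * w <= 1 / 4 * w) by (apply Rmult_le_compat_r; nra).
  assert ((1 / 2 - x) ^ 2 * w <= 1 / 4 * w) by (apply Rmult_le_compat_r; nra).
  apply Rabs_le; split; nra.
Qed.

Lemma Rabs_dup_defect_pair_sub_le (x : R) (N : nat) : 0 < x < 1 / 2 -> 1 <= INR N ->
  Rabs (dup_defect (x + INR N) + dup_defect (1 / 2 - x + INR N) - dup_pair_target (INR N))
  <= 35 * Rpower (INR N) (- (3 / 4)).
Proof.
  intros Hx HN.
  pose proof (Rabs_dup_defect_sub_approx_le (x + INR N) ltac:(lra)) as H1.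
  pose proof (Rabs_dup_defect_sub_approx_le (1 / 2 - x + INR N) ltac:(lra)) as H2.
  pose proof (Rabs_dup_approx_pair_sub_le x (INR N) Hx HN) as H3.
  pose proof (Rpower_neg_le (INR N) (x + INR N) (3 / 4) ltac:(lra) ltac:(lra)).
  pose proof (Rpower_neg_le (INR N) (1 / 2 - x + INR N) (3 / 4) ltac:(lra) ltac:(lra)).
  pose proof (Rinv_le_Rpower_34 (INR N) HN).
  unfold Rdiv in H3; apply Rabs_le_between in H1, H2, H3; apply Rabs_le; lra.
Qed.

Fixpoint sum_lt (f : nat -> R) (N : nat) : R :=
  match N with O => 0 | S n => sum_lt f n + f n end.

Definition ln_sum (y : R) (N : nat) : R := sum_lt (fun n => ln (y + INR n)) N.

Lemma hurwitz_zeta2_at0_add_nat (y : R) (N : nat) : 0 < y ->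
  hurwitz_zeta2_at0 y = sum_lt (fun n => ln (y + INR n) ^ 2) N + hurwitz_zeta2_at0 (y + INR N).
Proof.
  intros Hy; induction N as [| n IH]; cbn [sum_lt]; [simpl INR; rewrite Rplus_0_r; ring |].
  rewrite IH, (hurwitz_zeta2_at0_add1 (y + INR n)) by (pose proof (pos_INR n); lra).
  rewrite S_INR; replace (y + INR n + 1) with (y + (INR n + 1)) by ring; ring.
Qed.

Lemma ln_double_add (c : R) (n : nat) : 0 < c ->
  ln (2 * c + INR (2 * n)) = ln 2 + ln (c + INR n) /\
  ln (2 * c + INR (S (2 * n))) = ln 2 + ln (c + 1 / 2 + INR n).
Proof.
  intros Hc; pose proof (pos_INR n).
  rewrite <- !ln_mult, S_INR, mult_INR by lra; simpl INR.
  split; f_equal; field.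
Qed.

Lemma ln_sum_double (c : R) (N : nat) : 0 < c ->
  ln_sum (2 * c) (2 * N) = 2 * INR N * ln 2 + ln_sum c N + ln_sum (c + 1 / 2) N.
Proof.
  intros Hc; unfold ln_sum; induction N as [| n IH]; [simpl; ring |].
  replace (2 * S n)%nat with (S (S (2 * n))) by lia; cbn [sum_lt].
  destruct (ln_double_add c n Hc) as [-> ->]; rewrite IH, S_INR; ring.
Qed.

Lemma ln_sq_sum_double (c : R) (N : nat) : 0 < c ->
  sum_lt (fun n => ln (c + INR n) ^ 2) N + sum_lt (fun n => ln (c + 1 / 2 + INR n) ^ 2) N
  - sum_lt (fun n => ln (2 * c + INR n) ^ 2) (2 * N)
  = 2 * INR N * ln 2 ^ 2 - 2 * ln 2 * ln_sum (2 * c) (2 * N).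
Proof.
  intros Hc; rewrite ln_sum_double by exact Hc; unfold ln_sum.
  induction N as [| n IH]; [simpl; ring |].
  replace (2 * S n)%nat with (S (S (2 * n))) by lia; cbn [sum_lt].
  destruct (ln_double_add c n Hc) as [-> ->]; rewrite S_INR; lra.
Qed.

Definition zeta2_combination (x : R) : R :=
  hurwitz_zeta2_at0 (x + 1 / 2) + hurwitz_zeta2_at0 (1 / 2 - x)
  - hurwitz_zeta2_at0 (2 * x) - hurwitz_zeta2_at0 (1 - 2 * x)
  + hurwitz_zeta2_at0 x + hurwitz_zeta2_at0 (1 - x).

(* [ln_sum a M = ln (Gamma (a + M) / Gamma a)], so by Stirling's formula and the reflection
   formula [ln_sum_defect a M] tends to [ln (2 sin (PI a))]; this is what is proved below,
   without the Gamma function. *)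
Definition ln_sum_defect (a : R) (M : nat) : R :=
  ln_sum a M + ln_sum (1 - a) M - 2 * INR M * ln (INR M) + 2 * INR M.

Lemma zeta2_combination_telescope (x : R) (N : nat) : 0 < x < 1 / 2 -> (1 <= N)%nat ->
  zeta2_combination x + 2 * ln 2 * ln_sum_defect (2 * x) (2 * N)
  = dup_defect (x + INR N) + dup_defect (1 / 2 - x + INR N) - dup_pair_target (INR N).
Proof.
  intros Hx HN.
  assert (HN1 : 1 <= INR N) by (apply (le_INR 1); lia).
  unfold zeta2_combination, ln_sum_defect, dup_defect, dup_pair_target.
  replace (1 - x) with (1 / 2 - x + 1 / 2) by field.
  replace (1 - 2 * x) with (2 * (1 / 2 - x)) by field.
  rewrite (hurwitz_zeta2_at0_add_nat x N), (hurwitz_zeta2_at0_add_nat (x + 1 / 2) N),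
    (hurwitz_zeta2_at0_add_nat (2 * x) (2 * N)), (hurwitz_zeta2_at0_add_nat (1 / 2 - x) N),
    (hurwitz_zeta2_at0_add_nat (1 / 2 - x + 1 / 2) N),
    (hurwitz_zeta2_at0_add_nat (2 * (1 / 2 - x)) (2 * N)) by lra.
  pose proof (ln_sq_sum_double x N ltac:(lra)).
  pose proof (ln_sq_sum_double (1 / 2 - x) N ltac:(lra)).
  assert (E2N : INR (2 * N) = 2 * INR N) by (rewrite mult_INR; simpl; ring).
  rewrite !E2N, ln_mult by lra.
  replace (x + 1 / 2 + INR N) with (x + INR N + 1 / 2) by ring.
  replace (2 * x + 2 * INR N) with (2 * (x + INR N)) by ring.
  replace (1 / 2 - x + 1 / 2 + INR N) with (1 / 2 - x + INR N + 1 / 2) by ring.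
  replace (2 * (1 / 2 - x) + 2 * INR N) with (2 * (1 / 2 - x + INR N)) by ring.
  lra.
Qed.

Lemma is_lim_seq_Rpower_INR (q : R) : q < 0 -> is_lim_seq (fun N => Rpower (INR N) q) 0.
Proof.
  intros Hq; apply (is_lim_seq_ext (fun N => Rpower (INR N + 0) q));
    [intros N; rewrite Rplus_0_r; reflexivity |].
  apply (filterlim_comp _ _ _ INR (fun t => Rpower (t + 0) q) _ (Rbar_locally p_infty));
    [apply is_lim_seq_INR | apply is_lim_Rpower_shift_p_infty; exact Hq].
Qed.

Lemma is_lim_seq_dup_defect_pair_sub (x : R) : 0 < x < 1 / 2 ->
  is_lim_seq (fun N => dup_defect (x + INR N) + dup_defect (1 / 2 - x + INR N)
                       - dup_pair_target (INR N)) 0.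
Proof.
  intros Hx.
  pose proof (is_lim_seq_scal_l _ 35 _ (is_lim_seq_Rpower_INR (- (3 / 4)) ltac:(lra))) as Hup.
  rewrite Rbar_mult_0_r in Hup.
  pose proof (proj1 (is_lim_seq_opp _ _) Hup) as Hlow.
  change (Rbar_opp (Finite 0)) with (Finite (- 0)) in Hlow; rewrite Ropp_0 in Hlow.
  refine (is_lim_seq_le_le_loc _ _ _ 0 _ Hlow Hup).
  exists 1%nat; intros N HN.
  apply Rabs_le_between, (Rabs_dup_defect_pair_sub_le x N Hx).
  apply (le_INR 1); lia.
Qed.

Definition ln_sum_defect_lim (a : R) : R := - zeta2_combination (a / 2) / (2 * ln 2).

Lemma is_lim_seq_ln_sum_defect (a : R) : 0 < a < 1 ->
  is_lim_seq (fun N => ln_sum_defect a (2 * N)) (ln_sum_defect_lim a).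
Proof.
  intros Ha; pose proof ln_2_bounds.
  set (x := a / 2); assert (Hx : 0 < x < 1 / 2) by (unfold x; lra).
  unfold ln_sum_defect_lim; fold x; replace a with (2 * x) by (unfold x; field).
  apply is_lim_seq_ext_loc with
    (fun N => (dup_defect (x + INR N) + dup_defect (1 / 2 - x + INR N)
               - dup_pair_target (INR N) - zeta2_combination x) / (2 * ln 2)).
  - exists 1%nat; intros N HN.
    rewrite <- (zeta2_combination_telescope x N Hx HN); field; lra.
  - replace (- zeta2_combination x) with (0 - zeta2_combination x) by ring.
    apply is_lim_seq_div'; [apply is_lim_seq_minus' | apply is_lim_seq_const | lra].
    + apply is_lim_seq_dup_defect_pair_sub, Hx.
    + apply is_lim_seq_const.
Qed.

(** * The product formula for cos (PI z) *)

Lemma Rabs_sin_le (y : R) : Rabs (sin y) <= Rabs y.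
Proof.
  assert (Hpos : forall y, 0 <= y -> Rabs (sin y) <= y).
  { intros u Hu; destruct (Rle_lt_dec 1 u).
    - pose proof (SIN_bound u); apply Rabs_le; lra.
    - pose proof PI2_1.
      assert (0 <= sin u) by (apply sin_ge_0; lra).
      rewrite Rabs_right by lra.
      destruct (Req_dec u 0) as [-> | Hu0]; [rewrite sin_0; lra |].
      left; apply sin_lt_x; lra. }
  destruct (Rle_lt_dec 0 y).
  - rewrite (Rabs_right y) by lra; apply Hpos; lra.
  - rewrite <- Rabs_Ropp, <- sin_neg, (Rabs_left y) by lra; apply Hpos; lra.
Qed.

Lemma one_sub_cos_bounds (w : R) : 0 <= 1 - cos w <= w ^ 2 / 2.
Proof.
  pose proof (cos_2a_sin (w / 2)) as H; replace (2 * (w / 2)) with w in H by field.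
  pose proof (Rabs_sin_le (w / 2)) as Hs.
  apply Rsqr_le_abs_1 in Hs; unfold Rsqr in Hs.
  assert (0 <= sin (w / 2) * sin (w / 2)) by nra.
  split; nra.
Qed.

Lemma mul_cos_le_sin (t : R) : 0 <= t <= PI / 2 -> t * cos t <= sin t.
Proof.
  intros Ht.
  (* sin t - t cos t has derivative t sin t >= 0 on [0, PI/2] *)
  assert (H : is_RInt (fun s => s * sin s) 0 t (minus (sin t - t * cos t) (sin 0 - 0 * cos 0))).
  { apply (is_RInt_derive (fun s => sin s - s * cos s)).
    - intros x _; auto_derive; [auto | ring].
    - intros x _; apply (ex_derive_continuous (fun s => s * sin s)); auto_derive; auto. }
  assert (Hge : 0 <= RInt (fun s => s * sin s) 0 t).
  { apply RInt_ge_0; [lra | eexists; exact H |]; intros x Hx.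
    assert (0 <= sin x) by (apply sin_ge_0; pose proof PI2_Rlt_PI; lra); nra. }
  rewrite (is_RInt_unique _ _ _ _ H) in Hge.
  change (minus ?a ?b) with (a - b) in Hge; rewrite sin_0 in Hge; lra.
Qed.

Definition wallis_fun (z : R) (n : nat) (t : R) : R := cos (2 * z * t) * cos t ^ n.

Definition wallis (n : nat) (z : R) : R := RInt (wallis_fun z n) 0 (PI / 2).

Lemma ex_RInt_wallis_fun (z : R) (n : nat) (a b : R) : ex_RInt (wallis_fun z n) a b.
Proof.
  apply (ex_RInt_continuous (V := R_CompleteNormedModule)); intros t _.
  apply (ex_derive_continuous (wallis_fun z n)); unfold wallis_fun; auto_derive; auto.
Qed.

Lemma RInt_wallis_fun_lin (A B : R) (n m : nat) (z z' : R) :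
  RInt (fun t => A * wallis_fun z n t - B * wallis_fun z' m t) 0 (PI / 2)
  = A * wallis n z - B * wallis m z'.
Proof.
  pose proof (RInt_correct _ _ _ (ex_RInt_wallis_fun z n 0 (PI / 2))) as H1.
  pose proof (RInt_correct _ _ _ (ex_RInt_wallis_fun z' m 0 (PI / 2))) as H2.
  apply (is_RInt_scal (V := R_NormedModule) _ _ _ A) in H1.
  apply (is_RInt_scal (V := R_NormedModule) _ _ _ B) in H2.
  apply is_RInt_unique, (is_RInt_minus (V := R_NormedModule) _ _ _ _ _ _ H1 H2).
Qed.

Lemma ex_RInt_wallis_fun_lin (A B : R) (n m : nat) (z z' : R) :
  ex_RInt (fun t => A * wallis_fun z n t - B * wallis_fun z' m t) 0 (PI / 2).
Proof.
  pose proof (RInt_correct _ _ _ (ex_RInt_wallis_fun z n 0 (PI / 2))) as H1.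
  pose proof (RInt_correct _ _ _ (ex_RInt_wallis_fun z' m 0 (PI / 2))) as H2.
  apply (is_RInt_scal (V := R_NormedModule) _ _ _ A) in H1.
  apply (is_RInt_scal (V := R_NormedModule) _ _ _ B) in H2.
  eexists; exact (is_RInt_minus (V := R_NormedModule) _ _ _ _ _ _ H1 H2).
Qed.

(* Integration by parts twice, packaged as one antiderivative that vanishes at both ends. *)
Lemma wallis_rec (n : nat) (z : R) :
  ((INR n + 2) ^ 2 - 4 * z ^ 2) * wallis (S (S n)) z = (INR n + 2) * (INR n + 1) * wallis n z.
Proof.
  set (G := fun t => - 2 * z * sin (2 * z * t) * cos t ^ S (S n)
                     + (INR n + 2) * cos (2 * z * t) * cos t ^ S n * sin t).
  assert (H : is_RInt (fun t => ((INR n + 2) ^ 2 - 4 * z ^ 2) * wallis_fun z (S (S n)) t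
                                - (INR n + 2) * (INR n + 1) * wallis_fun z n t)
                0 (PI / 2) (minus (G (PI / 2)) (G 0))).
  { apply (is_RInt_derive G).
    - intros t _; unfold G, wallis_fun; auto_derive; auto.
      change (match n with 0%nat => 1 | S _ => INR n + 1 end) with (INR (S n)); rewrite S_INR.
      pose proof (sin2_cos2 t) as Hsc; unfold Rsqr in Hsc.
      apply Rminus_diag_uniq; match goal with |- ?A - ?B = 0 =>
        replace (A - B) with (- cos (2 * z * t) * (INR n + 2) * (INR n + 1) * cos t ^ n
                              * (sin t * sin t + cos t * cos t - 1)) by (simpl; ring) end.
      rewrite Hsc; ring.
    - intros t _; apply (ex_derive_continuous (fun t => _ * wallis_fun z (S (S n)) t - _));
        unfold wallis_fun; auto_derive; auto. }
  apply Rminus_diag_uniq; rewrite <- RInt_wallis_fun_lin, (is_RInt_unique _ _ _ _ H).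
  unfold G; rewrite cos_PI2, Rmult_0_r, sin_0, cos_0; change (minus ?a ?b) with (a - b).
  simpl; ring.
Qed.

Lemma wallis_1 (z : R) : (1 - 4 * z ^ 2) * wallis 1 z = cos (PI * z).
Proof.
  set (G := fun t => sin t * cos (2 * z * t) - 2 * z * cos t * sin (2 * z * t)).
  assert (H : is_RInt (fun t => (1 - 4 * z ^ 2) * wallis_fun z 1 t - 0 * wallis_fun z 0 t)
                0 (PI / 2) (minus (G (PI / 2)) (G 0))).
  { apply (is_RInt_derive G).
    - intros t _; unfold G, wallis_fun; auto_derive; auto; simpl; ring.
    - intros t _; apply (ex_derive_continuous (fun t => _ * wallis_fun z 1 t - _));
        unfold wallis_fun; auto_derive; auto. }
  rewrite <- (Rminus_0_r ((1 - 4 * z ^ 2) * wallis 1 z)), <- (Rmult_0_l (wallis 0 z)).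
  rewrite <- RInt_wallis_fun_lin, (is_RInt_unique _ _ _ _ H).
  unfold G; rewrite sin_PI2, cos_PI2, !Rmult_0_r, sin_0, cos_0; change (minus ?a ?b) with (a - b).
  replace (2 * z * (PI / 2)) with (PI * z) by field; ring.
Qed.

Lemma wallis_1_0 : wallis 1 0 = 1.
Proof. pose proof (wallis_1 0) as H; rewrite Rmult_0_r, cos_0 in H; lra. Qed.

Lemma wallis_0_rec (n : nat) : wallis (S (S n)) 0 = (INR n + 1) / (INR n + 2) * wallis n 0.
Proof.
  pose proof (wallis_rec n 0); pose proof (pos_INR n).
  apply Rmult_eq_reg_l with ((INR n + 2) ^ 2); [| nra].
  replace ((INR n + 2) ^ 2 * ((INR n + 1) / (INR n + 2) * wallis n 0))
    with ((INR n + 2) * (INR n + 1) * wallis n 0) by (field; lra).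
  rewrite <- H; ring.
Qed.

Lemma wallis_odd_0_pos (m : nat) : 0 < wallis (2 * m + 1) 0.
Proof.
  induction m as [| m IH].
  - simpl; rewrite wallis_1_0; lra.
  - replace (2 * S m + 1)%nat with (S (S (2 * m + 1))) by lia.
    rewrite wallis_0_rec; pose proof (pos_INR (2 * m + 1)).
    apply Rmult_lt_0_compat; [apply Rdiv_lt_0_compat; lra | exact IH].
Qed.

(* On [0, PI/2]: 1 - cos (2 z t) <= 2 z^2 t^2 and (t cos t)^2 <= sin^2 t = 1 - cos^2 t. *)
Lemma wallis_fun_0_sub_bounds (n : nat) (z t : R) : 0 <= t <= PI / 2 ->
  0 <= wallis_fun 0 (S (S n)) t - wallis_fun z (S (S n)) t
    <= 2 * z ^ 2 * (wallis_fun 0 n t - wallis_fun 0 (S (S n)) t).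
Proof.
  intros Ht.
  assert (Hc : 0 <= cos t) by (apply cos_ge_0; pose proof PI2_RGT_0; lra).
  pose proof (pow_le _ n Hc) as Hcn.
  pose proof (mul_cos_le_sin t Ht).
  pose proof (sin2_cos2 t) as Hsc; unfold Rsqr in Hsc.
  pose proof (one_sub_cos_bounds (2 * z * t)) as [Hc0 Hc1].
  unfold wallis_fun; rewrite !Rmult_0_r, !Rmult_0_l, cos_0.
  change (cos t ^ S (S n)) with (cos t * (cos t * cos t ^ n)).
  assert (Hcc : 0 <= cos t * cos t * cos t ^ n) by (apply Rmult_le_pos; nra).
  split; [nra |].
  assert (Htc : t * cos t * (t * cos t) <= 1 - cos t * cos t).
  { assert (0 <= t * cos t) by (apply Rmult_le_pos; lra).
    assert (t * cos t * (t * cos t) <= sin t * sin t) by (apply Rmult_le_compat; lra).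
    lra. }
  assert ((1 - cos (2 * z * t)) * (cos t * cos t * cos t ^ n)
          <= 2 * z ^ 2 * cos t ^ n * (t * cos t * (t * cos t))).
  { apply Rle_trans with ((2 * z * t) ^ 2 / 2 * (cos t * cos t * cos t ^ n));
      [apply Rmult_le_compat_r; lra | right; field]. }
  assert (2 * z ^ 2 * cos t ^ n * (t * cos t * (t * cos t))
          <= 2 * z ^ 2 * cos t ^ n * (1 - cos t * cos t))
    by (apply Rmult_le_compat_l; [apply Rmult_le_pos; nra | exact Htc]).
  nra.
Qed.

Lemma wallis_0_sub_bounds (n : nat) (z : R) :
  0 <= wallis (S (S n)) 0 - wallis (S (S n)) z <= 2 * z ^ 2 * (wallis n 0 - wallis (S (S n)) 0).
Proof.
  pose proof PI2_RGT_0.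
  assert (E : wallis (S (S n)) 0 - wallis (S (S n)) z
    = RInt (fun t => 1 * wallis_fun 0 (S (S n)) t - 1 * wallis_fun z (S (S n)) t) 0 (PI / 2))
    by (rewrite RInt_wallis_fun_lin; ring).
  rewrite E, Rmult_minus_distr_l, <- RInt_wallis_fun_lin; split.
  - apply RInt_ge_0; [lra | apply ex_RInt_wallis_fun_lin |]; intros t Ht.
    rewrite !Rmult_1_l; apply wallis_fun_0_sub_bounds; lra.
  - apply RInt_le; [lra | apply ex_RInt_wallis_fun_lin | apply ex_RInt_wallis_fun_lin |].
    intros t Ht; rewrite !Rmult_1_l, <- Rmult_minus_distr_l.
    apply wallis_fun_0_sub_bounds; lra.
Qed.

Fixpoint cos_partial_product (z : R) (m : nat) : R :=
  match m with
  | O => 1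
  | S j => cos_partial_product z j * (1 - z ^ 2 / (INR j + 1 / 2) ^ 2)
  end.

Lemma cos_partial_product_wallis (m : nat) (z : R) :
  cos_partial_product z (S m) * wallis (2 * m + 1) z = cos (PI * z) * wallis (2 * m + 1) 0.
Proof.
  induction m as [| m IH].
  - change (2 * 0 + 1)%nat with 1%nat; cbn [cos_partial_product].
    rewrite wallis_1_0, <- wallis_1; simpl INR; field.
  - replace (2 * S m + 1)%nat with (S (S (2 * m + 1))) by lia.
    change (cos_partial_product z (S (S m)))
      with (cos_partial_product z (S m) * (1 - z ^ 2 / (INR (S m) + 1 / 2) ^ 2)).
    pose proof (wallis_rec (2 * m + 1) z) as Hrec; rewrite wallis_0_rec.
    assert (EI : INR (2 * m + 1) = 2 * INR m + 1) by (rewrite plus_INR, mult_INR; simpl; ring).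
    rewrite EI in *; rewrite S_INR; pose proof (pos_INR m).
    set (M := INR m) in *.
    replace (1 - z ^ 2 / (M + 1 + 1 / 2) ^ 2)
      with (((2 * M + 1 + 2) ^ 2 - 4 * z ^ 2) / (2 * M + 3) ^ 2) by (field; lra).
    replace (cos_partial_product z (S m) * (((2 * M + 1 + 2) ^ 2 - 4 * z ^ 2) / (2 * M + 3) ^ 2)
             * wallis (S (S (2 * m + 1))) z)
      with (cos_partial_product z (S m) * (((2 * M + 1 + 2) ^ 2 - 4 * z ^ 2)
             * wallis (S (S (2 * m + 1))) z) / (2 * M + 3) ^ 2) by (field; lra).
    rewrite Hrec.
    replace (cos_partial_product z (S m) * ((2 * M + 1 + 2) * (2 * M + 1 + 1)
             * wallis (2 * m + 1) z) / (2 * M + 3) ^ 2)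
      with (cos_partial_product z (S m) * wallis (2 * m + 1) z
            * ((2 * M + 1 + 2) * (2 * M + 1 + 1)) / (2 * M + 3) ^ 2) by (field; lra).
    rewrite IH; field; lra.
Qed.

Lemma wallis_odd_sub_bounds (k : nat) (z : R) :
  0 <= wallis (2 * S k + 1) 0 - wallis (2 * S k + 1) z
    <= z ^ 2 / (INR k + 1) * wallis (2 * S k + 1) 0.
Proof.
  replace (2 * S k + 1)%nat with (S (S (2 * k + 1))) by lia.
  pose proof (wallis_0_sub_bounds (2 * k + 1) z) as [B1 B2]; split; [exact B1 |].
  rewrite wallis_0_rec in *.
  assert (EI : INR (2 * k + 1) = 2 * INR k + 1) by (rewrite plus_INR, mult_INR; simpl; ring).
  rewrite EI in *; pose proof (pos_INR k).
  eapply Rle_trans; [exact B2 | right; field; lra].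
Qed.

Lemma wallis_odd_ratio_bounds (k : nat) (z : R) :
  0 <= 1 - wallis (2 * S k + 1) z / wallis (2 * S k + 1) 0 <= z ^ 2 / (INR k + 1).
Proof.
  destruct (wallis_odd_sub_bounds k z) as [B1 B2].
  pose proof (wallis_odd_0_pos (S k)); pose proof (pos_INR k).
  replace (1 - wallis (2 * S k + 1) z / wallis (2 * S k + 1) 0)
    with ((wallis (2 * S k + 1) 0 - wallis (2 * S k + 1) z) / wallis (2 * S k + 1) 0)
    by (field; lra).
  split; [apply Rdiv_le_0_compat; lra |].
  apply Rmult_le_reg_r with (wallis (2 * S k + 1) 0); [lra |].
  unfold Rdiv at 1; rewrite Rmult_assoc, Rinv_l, Rmult_1_r by lra; exact B2.
Qed.

Lemma is_lim_seq_wallis_odd_ratio (z : R) :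
  is_lim_seq (fun k => wallis (2 * S k + 1) z / wallis (2 * S k + 1) 0) 1.
Proof.
  apply is_lim_seq_le_le with (fun k => 1 - z ^ 2 / (INR k + 1)) (fun _ => 1);
    [intros k; pose proof (wallis_odd_ratio_bounds k z); lra | | apply is_lim_seq_const].
  replace (Finite 1) with (Finite (1 - z ^ 2 * 0)) by (f_equal; ring).
  apply is_lim_seq_minus'; [apply is_lim_seq_const |].
  apply is_lim_seq_scal_l with (a := z ^ 2) (lu := Finite 0).
  replace (Finite 0) with (Rbar_inv p_infty) by reflexivity.
  apply is_lim_seq_inv; [| discriminate].
  eapply is_lim_seq_plus; [apply is_lim_seq_INR | apply is_lim_seq_const | reflexivity].
Qed.

Lemma is_lim_seq_cos_partial_product (z : R) : z ^ 2 < 1 / 4 ->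
  is_lim_seq (cos_partial_product z) (cos (PI * z)).
Proof.
  intros Hz; set (r := fun k => wallis (2 * S k + 1) z / wallis (2 * S k + 1) 0).
  assert (Hr : forall k, 0 < r k).
  { intros k; pose proof (wallis_odd_ratio_bounds k z); pose proof (pos_INR k).
    assert (z ^ 2 / (INR k + 1) <= z ^ 2)
      by (unfold Rdiv; rewrite <- (Rmult_1_r (z ^ 2)) at 2;
          apply Rmult_le_compat_l; [nra | rewrite <- Rinv_1; apply Rinv_le_contravar; lra]).
    unfold r; lra. }
  apply (is_lim_seq_incr_n _ 2), (is_lim_seq_ext (fun k => cos (PI * z) / r k)).
  - intros k; replace (k + 2)%nat with (S (S k)) by lia.
    pose proof (cos_partial_product_wallis (S k) z) as E.
    pose proof (wallis_odd_0_pos (S k)); specialize (Hr k); unfold r in *.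
    assert (0 < wallis (2 * S k + 1) z)
      by (apply Rmult_lt_reg_r with (/ wallis (2 * S k + 1) 0); [apply Rinv_0_lt_compat |]; lra).
    apply Rmult_eq_reg_r with (wallis (2 * S k + 1) z); [| lra].
    rewrite E; field; lra.
  - pose proof (is_lim_seq_div' _ _ _ _ (is_lim_seq_const (cos (PI * z)))
                  (is_lim_seq_wallis_odd_ratio z) ltac:(lra)) as H.
    rewrite Rdiv_1_r in H; exact H.
Qed.

Lemma cos_partial_product_factor_pos (z : R) (j : nat) : z ^ 2 < 1 / 4 ->
  0 < 1 - z ^ 2 / (INR j + 1 / 2) ^ 2.
Proof.
  intros Hz; pose proof (pos_INR j).
  assert (1 / 4 <= (INR j + 1 / 2) ^ 2) by nra.
  assert (z ^ 2 / (INR j + 1 / 2) ^ 2 < 1).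
  { apply Rmult_lt_reg_r with ((INR j + 1 / 2) ^ 2); [nra |].
    unfold Rdiv; rewrite Rmult_assoc, Rinv_l, Rmult_1_r by nra; lra. }
  lra.
Qed.

Lemma cos_partial_product_pos (z : R) (m : nat) : z ^ 2 < 1 / 4 -> 0 < cos_partial_product z m.
Proof.
  intros Hz; induction m as [| m IH]; cbn [cos_partial_product]; [lra |].
  apply Rmult_lt_0_compat; [exact IH | apply cos_partial_product_factor_pos, Hz].
Qed.

Lemma ln_sum_reflection_eq (a : R) (M : nat) : 0 < a < 1 ->
  ln_sum a M + ln_sum (1 - a) M - 2 * ln_sum (1 / 2) M = ln (cos_partial_product (a - 1 / 2) M).
Proof.
  intros Ha; assert (Hz : (a - 1 / 2) ^ 2 < 1 / 4) by nra.
  unfold ln_sum; induction M as [| m IH]; cbn [sum_lt cos_partial_product]; [rewrite ln_1; ring |].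
  rewrite ln_mult
    by (apply cos_partial_product_pos || apply cos_partial_product_factor_pos; exact Hz).
  rewrite <- IH; pose proof (pos_INR m).
  replace (1 - (a - 1 / 2) ^ 2 / (INR m + 1 / 2) ^ 2)
    with ((a + INR m) * (1 - a + INR m) / ((1 / 2 + INR m) * (1 / 2 + INR m))) by (field; lra).
  unfold Rdiv; rewrite ln_mult, ln_mult, ln_Rinv, ln_mult
    by (try apply Rinv_0_lt_compat; try apply Rmult_lt_0_compat; lra).
  ring.
Qed.

Lemma is_lim_seq_ln_sum_reflection (a : R) : 0 < a < 1 ->
  is_lim_seq (fun M => ln_sum a M + ln_sum (1 - a) M - 2 * ln_sum (1 / 2) M) (ln (sin (PI * a))).
Proof.
  intros Ha; assert (Hz : (a - 1 / 2) ^ 2 < 1 / 4) by nra.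
  apply (is_lim_seq_ext (fun M => ln (cos_partial_product (a - 1 / 2) M)));
    [intros; symmetry; apply ln_sum_reflection_eq, Ha |].
  replace (sin (PI * a)) with (cos (PI * (a - 1 / 2))).
  2:{ replace (PI * (a - 1 / 2)) with (- (PI / 2 - PI * a)) by field.
      rewrite cos_neg, cos_shift; reflexivity. }
  assert (Hs : 0 < cos (PI * (a - 1 / 2))).
  { pose proof PI_RGT_0; apply cos_gt_0; nra. }
  apply (is_lim_seq_continuous ln); [apply continuity_pt_filterlim, continuous_ln; lra |].
  apply is_lim_seq_cos_partial_product, Hz.
Qed.

Lemma ln_sum_defect_quarter (N : nat) :
  ln_sum_defect (1 / 4) N = 1 / 2 * ln_sum_defect (1 / 2) (2 * N).
Proof.
  unfold ln_sum_defect.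
  pose proof (ln_sum_double (1 / 4) N ltac:(lra)) as E.
  replace (2 * (1 / 4)) with (1 / 2) in E by field.
  replace (1 - 1 / 4) with (1 / 4 + 1 / 2) by field; replace (1 - 1 / 2) with (1 / 2) by field.
  rewrite E, mult_INR; simpl (INR 2).
  destruct N as [| n]; [rewrite Rmult_0_r; cbn [INR]; rewrite !Rmult_0_r, !Rmult_0_l; field |].
  pose proof (pos_INR n); rewrite S_INR, ln_mult by lra.
  replace (1 + 1) with 2 by ring; field.
Qed.

Lemma filterlim_double_eventually : filterlim (fun n => (2 * n)%nat) eventually eventually.
Proof. intros P [N HN]; exists N; intros n Hn; apply HN; lia. Qed.

Lemma ln_sum_defect_lim_sub_half (a : R) : 0 < a < 1 ->
  ln_sum_defect_lim a - ln_sum_defect_lim (1 / 2) = ln (sin (PI * a)).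
Proof.
  intros Ha.
  pose proof (is_lim_seq_minus' _ _ _ _ (is_lim_seq_ln_sum_defect a Ha)
                (is_lim_seq_ln_sum_defect (1 / 2) ltac:(lra))) as H1.
  pose proof (is_lim_seq_subseq _ _ _ filterlim_double_eventually
                (is_lim_seq_ln_sum_reflection a Ha)) as H2.
  apply (is_lim_seq_ext _ (fun n => ln_sum_defect a (2 * n) - ln_sum_defect (1 / 2) (2 * n))) in H2.
  - apply is_lim_seq_unique in H1, H2; rewrite H1 in H2; injection H2; auto.
  - intros n; unfold ln_sum_defect; replace (1 - 1 / 2) with (1 / 2) by field; ring.
Qed.

(* The limit at 1/4 is half the limit at 1/2 (ln_sum_defect_quarter), while the two differ by
   ln (sin (PI / 4)) = - ln 2 / 2. *)
Lemma ln_sum_defect_lim_half : ln_sum_defect_lim (1 / 2) = ln 2.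
Proof.
  assert (H1 : ln_sum_defect_lim (1 / 4) = 1 / 2 * ln_sum_defect_lim (1 / 2)).
  { pose proof (is_lim_seq_ln_sum_defect (1 / 4) ltac:(lra)) as A.
    pose proof (is_lim_seq_subseq _ _ _ filterlim_double_eventually
                  (is_lim_seq_ln_sum_defect (1 / 2) ltac:(lra))) as B.
    apply (is_lim_seq_scal_l _ (1 / 2)) in B.
    apply (is_lim_seq_ext _ (fun N => ln_sum_defect (1 / 4) (2 * N))) in B;
      [| intros; symmetry; apply ln_sum_defect_quarter].
    apply is_lim_seq_unique in A; apply is_lim_seq_unique in B.
    rewrite A in B; injection B; auto. }
  pose proof (ln_sum_defect_lim_sub_half (1 / 4) ltac:(lra)) as H2.
  replace (PI * (1 / 4)) with (PI / 4) in H2 by field; rewrite sin_PI4 in H2.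
  assert (Hs : ln (1 / sqrt 2) = - (ln 2 / 2)).
  { assert (0 < sqrt 2) by (apply sqrt_lt_R0; lra).
    assert (ln (sqrt 2) + ln (sqrt 2) = ln 2)
      by (rewrite <- ln_mult, sqrt_sqrt by lra; reflexivity).
    unfold Rdiv at 1; rewrite Rmult_1_l, ln_Rinv by lra; lra. }
  lra.
Qed.

Lemma zeta2_combination_eq (x : R) : 0 < x < 1 / 2 ->
  zeta2_combination x = - 2 * ln 2 * ln (2 * sin (2 * PI * x)).
Proof.
  intros Hx; pose proof ln_2_bounds as Hln2.
  pose proof (ln_sum_defect_lim_sub_half (2 * x) ltac:(lra)) as H.
  rewrite ln_sum_defect_lim_half in H; unfold ln_sum_defect_lim in H.
  replace (2 * x / 2) with x in H by field.
  assert (Hs : 0 < sin (PI * (2 * x)))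
    by (pose proof PI_RGT_0; apply sin_gt_0; nra).
  replace (2 * PI * x) with (PI * (2 * x)) by ring; rewrite ln_mult by lra.
  assert (E : zeta2_combination x = - (2 * ln 2) * (- zeta2_combination x / (2 * ln 2)))
    by (field; lra).
  rewrite E; replace (- zeta2_combination x / (2 * ln 2)) with (ln 2 + ln (sin (PI * (2 * x))))
    by lra.
  ring.
Qed.

Theorem mainTheorem7 (x : R) (hx0 : 0 < x) (hx1 : x < 1 / 2) :
  hurwitz_zeta2_at0 (x + 1 / 2) + hurwitz_zeta2_at0 (1 / 2 - x)
  = hurwitz_zeta2_at0 (2 * x) + hurwitz_zeta2_at0 (1 - 2 * x)
    - (hurwitz_zeta2_at0 x + hurwitz_zeta2_at0 (1 - x))
    - 2 * ln 2 * ln (2 * sin (2 * PI * x)).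
Proof.
  pose proof (zeta2_combination_eq x (conj hx0 hx1)) as H.
  unfold zeta2_combination in H; lra.
Qed.
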